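(* Let $\Omega\subset\mathbb{R}^n$ be open and $f\in C^2(\Omega)\cap C(\bar\Omega)$ with $|\mathbf Hf(x)|\le1$ for all $x\in\Omega$, where $\mathbf Hf$ is the Hessian matrix and $|\cdot|$ its operator norm. Then for all $\sigma,\eta>0$, $$\{x\in\Omega:|f(x)|\le\sigma\eta\}\subset\{x\in\Omega:|\nabla f(x)|\le\sigma+\eta\}\cup N_\sigma\Big(\partial\Omega\cup\big(\{f=0\}\cap\{|\nabla f|>\eta\}\big)\Big).$$
   Context: $N_\sigma(E)$ denotes the (open) $\sigma$-neighborhood of a set $E$; the sets $\{f=0\}$ and $\{|\nabla f|>\eta\}$ are subsets of $\Omega$. *)

From mathcomp Require Import all_boot.
From Stdlib Require Import Reals.
Set Implicit Arguments.
Unset Strict Implicit.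

Local Open Scope R_scope.

Definition vec (n : nat) := 'I_n -> R.

Definition vsum (n : nat) (F : 'I_n -> R) : R := \big[Rplus/0]_(i < n) F i.

Definition vadd n (x y : vec n) : vec n := fun i => x i + y i.
Definition vsub n (x y : vec n) : vec n := fun i => x i - y i.
Definition dot n (x y : vec n) : R := vsum (fun i => x i * y i).
Definition vnorm n (x : vec n) : R := sqrt (dot x x).
Definition vdist n (x y : vec n) : R := vnorm (vsub x y).

Definition mat (n : nat) := 'I_n -> 'I_n -> R.
Definition mulmv n (A : mat n) (v : vec n) : vec n :=
  fun i => vsum (fun j => A i j * v j).
(* |A| <= c for the operator norm induced by the Euclidean norm
   (unfolding of  sup_{v<>0} |Av|/|v| <= c). *)
Definition opnorm_le n (A : mat n) (c : R) : Prop :=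
  forall v : vec n, vnorm (mulmv A v) <= c * vnorm v.

Definition is_open n (O : vec n -> Prop) : Prop :=
  forall x, O x -> exists r, 0 < r /\ forall y, vdist x y < r -> O y.
Definition vclosure n (E : vec n -> Prop) : vec n -> Prop :=
  fun x => forall r, 0 < r -> exists y, E y /\ vdist x y < r.
Definition vboundary n (E : vec n -> Prop) : vec n -> Prop :=
  fun x => vclosure E x /\ vclosure (fun y => ~ E y) x.
Definition nbhd n (s : R) (E : vec n -> Prop) : vec n -> Prop :=
  fun x => exists y, E y /\ vdist x y < s.

Definition has_grad n (f : vec n -> R) (x g : vec n) : Prop :=
  forall eps, 0 < eps -> exists delta, 0 < delta /\
    forall h : vec n, vnorm h < delta ->
      Rabs (f (vadd x h) - f x - dot g h) <= eps * vnorm h.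

Definition has_jac n (F : vec n -> vec n) (x : vec n) (A : mat n) : Prop :=
  forall eps, 0 < eps -> exists delta, 0 < delta /\
    forall h : vec n, vnorm h < delta ->
      vnorm (vsub (vsub (F (vadd x h)) (F x)) (mulmv A h)) <= eps * vnorm h.

Definition cont_on n (E : vec n -> Prop) (g : vec n -> R) : Prop :=
  forall x, E x -> forall eps, 0 < eps -> exists delta, 0 < delta /\
    forall y, E y -> vdist x y < delta -> Rabs (g y - g x) < eps.

Definition is_C2 n (O : vec n -> Prop) (f : vec n -> R)
  (gradf : vec n -> vec n) (hessf : vec n -> mat n) : Prop :=
  (forall x, O x -> has_grad f x (gradf x)) /\
  (forall x, O x -> has_jac gradf x (hessf x)) /\
  (forall i j : 'I_n, cont_on O (fun x => hessf x i j)).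

(* Assume |grad f(x)| > sigma + eta and f(x) <> 0, and walk from x along the unit
   direction u = -sign(f x) grad f(x) / |grad f(x)| of steepest descent of |f|.
   Then phi(t) = sign(f x) f(x + t u) has phi(0) = |f(x)| <= sigma eta,
   phi'(0) = -|grad f(x)| and phi'' <= 1 since |Hf| <= 1, hence
   phi(t) <= sigma eta - (|grad f(x)| - sigma) t for t <= sigma: phi vanishes
   before some time < sigma, unless the segment leaves Omega earlier.  At the
   first exit or first zero T we find a boundary point, or a zero of f where
   |grad f| >= -phi'(T) >= |grad f(x)| - T > eta, at distance T < sigma from x. *)

From mathcomp Require Import all_boot.
From Stdlib Require Import Reals Lra FunctionalExtensionality Classical.
Local Open Scope R_scope.
Set Implicit Arguments.
Unset Strict Implicit.

Lemma vsum_add n (F G : 'I_n -> R) : vsum (fun i => F i + G i) = vsum F + vsum G.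
Proof.
rewrite /vsum; elim/big_rec3: _ => [|i a b c _ ->]; ring.
Qed.

Lemma vsum_scal n c (F : 'I_n -> R) : vsum (fun i => c * F i) = c * vsum F.
Proof.
rewrite /vsum; elim/big_rec2: _ => [|i a b _ ->]; ring.
Qed.

Lemma vsum_ge0 n (F : 'I_n -> R) : (forall i, 0 <= F i) -> 0 <= vsum F.
Proof.
by move=> F_ge0; apply: big_ind => [|a b|i _]; [lra | apply: Rplus_le_le_0_compat |].
Qed.

Lemma vsum_ext n (F G : 'I_n -> R) : (forall i, F i = G i) -> vsum F = vsum G.
Proof. by move=> FG; apply: eq_bigr => i _. Qed.

Definition scale n (c : R) (v : vec n) : vec n := fun i => c * v i.

Lemma dot_ge0 n (v : vec n) : 0 <= dot v v.
Proof. by apply: vsum_ge0 => i; apply: Rle_0_sqr. Qed.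

Lemma dot_scal_l n c (a b : vec n) : dot (scale c a) b = c * dot a b.
Proof. by rewrite /dot -vsum_scal; apply: vsum_ext => i; rewrite /scale; ring. Qed.

Lemma dot_scal_r n c (a b : vec n) : dot a (scale c b) = c * dot a b.
Proof. by rewrite /dot -vsum_scal; apply: vsum_ext => i; rewrite /scale; ring. Qed.

Lemma dot_sub_l n (a b c : vec n) : dot (vsub a b) c = dot a c - dot b c.
Proof.
rewrite /dot (vsum_ext (G := fun i => a i * c i + (-1) * (b i * c i))).
  by rewrite vsum_add vsum_scal; ring.
by move=> i; rewrite /vsub; ring.
Qed.

Lemma dot_sym n (a b : vec n) : dot a b = dot b a.
Proof. by apply: vsum_ext => i; ring. Qed.

Lemma dot_sub_r n (a b c : vec n) : dot a (vsub b c) = dot a b - dot a c.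
Proof. by rewrite dot_sym dot_sub_l !(dot_sym a). Qed.

Lemma vnorm_sq n (v : vec n) : vnorm v * vnorm v = dot v v.
Proof. exact/sqrt_sqrt/dot_ge0. Qed.

Lemma vnorm_scale n c (v : vec n) : vnorm (scale c v) = Rabs c * vnorm v.
Proof.
rewrite /vnorm dot_scal_l dot_scal_r -Rmult_assoc sqrt_mult_alt ?sqrt_Rsqr_abs //.
exact: Rle_0_sqr.
Qed.

Lemma vdist_refl n (x : vec n) : vdist x x = 0.
Proof.
rewrite /vdist /vnorm /dot (vsum_ext (G := fun i => 0 * 0)).
  by rewrite vsum_scal Rmult_0_l sqrt_0.
by move=> i; rewrite /vsub; ring.
Qed.

(* Cauchy-Schwarz against a unit vector, from [0 <= |g - <g,u> u|^2 = |g|^2 - <g,u>^2]. *)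
Lemma Rabs_dot_unit_le n (g u : vec n) : vnorm u = 1 -> Rabs (dot g u) <= vnorm g.
Proof.
move=> u_unit; set c := dot g u.
have uu : dot u u = 1 by rewrite -vnorm_sq u_unit; ring.
have proj_ge0 : 0 <= dot g g - c * c.
  have := dot_ge0 (vsub g (scale c u)).
  rewrite dot_sub_l !dot_sub_r !dot_scal_l !dot_scal_r uu (dot_sym u g) -/c; lra.
rewrite -sqrt_Rsqr_abs /vnorm; apply: sqrt_le_1_alt; rewrite /Rsqr; lra.
Qed.

Lemma quad_form_unit_le n (H : mat n) c (u : vec n) :
  opnorm_le H c -> vnorm u = 1 -> Rabs (dot (mulmv H u) u) <= c.
Proof.
move=> H_le u_unit; apply: Rle_trans (Rabs_dot_unit_le _ u_unit) _.
by have := H_le u; rewrite u_unit Rmult_1_r.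
Qed.

Definition line n (x u : vec n) (t : R) : vec n := vadd x (scale t u).

Lemma line0 n (x u : vec n) : line x u 0 = x.
Proof. by apply: functional_extensionality => i; rewrite /line /vadd /scale; ring. Qed.

Lemma line_shift n (x u : vec n) c h : vadd (line x u c) (scale h u) = line x u (c + h).
Proof. by apply: functional_extensionality => i; rewrite /line /vadd /scale; ring. Qed.

Lemma vdist_line n (x u : vec n) a b :
  vnorm u = 1 -> vdist (line x u a) (line x u b) = Rabs (a - b).
Proof.
move=> u_unit; rewrite /vdist.
have -> : vsub (line x u a) (line x u b) = scale (a - b) u.
  by apply: functional_extensionality => i; rewrite /line /vsub /vadd /scale; ring.
by rewrite vnorm_scale u_unit Rmult_1_r.
Qed.

Lemma derivable_pt_lim_of_approx (F : R -> R) c l :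
  (forall eps, 0 < eps -> exists delta, 0 < delta /\
     forall h, Rabs h < delta -> Rabs (F (c + h) - F c - h * l) <= eps * Rabs h) ->
  derivable_pt_lim F c l.
Proof.
move=> approx eps eps_gt0.
have [d [d_gt0 d_approx]] := approx (eps / 2) ltac:(lra).
exists (mkposreal d d_gt0) => h h_neq0 h_lt /=.
have h_pos : 0 < Rabs h by apply: Rabs_pos_lt.
have -> : (F (c + h) - F c) / h - l = (F (c + h) - F c - h * l) / h by field.
rewrite /Rdiv Rabs_mult Rabs_inv; apply: (Rmult_lt_reg_r (Rabs h)) => //.
rewrite Rmult_assoc Rinv_l; last lra.
have := d_approx h h_lt; nra.
Qed.

Lemma derivable_line_grad n (f : vec n -> R) (x u g : vec n) c :
  vnorm u = 1 -> has_grad f (line x u c) g ->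
  derivable_pt_lim (fun t => f (line x u t)) c (dot g u).
Proof.
move=> u_unit f_grad; apply: derivable_pt_lim_of_approx => eps eps_gt0.
have [d [d_gt0 d_approx]] := f_grad eps eps_gt0.
exists d; split=> // h h_lt.
by have := d_approx (scale h u); rewrite vnorm_scale u_unit Rmult_1_r line_shift dot_scal_r; apply.
Qed.

Lemma mulmv_scale n (H : mat n) c (v : vec n) : mulmv H (scale c v) = scale c (mulmv H v).
Proof.
apply: functional_extensionality => i; rewrite /mulmv /scale -vsum_scal.
by apply: vsum_ext => j; ring.
Qed.

Lemma derivable_line_jac n (F : vec n -> vec n) (x u : vec n) (H : mat n) c :
  vnorm u = 1 -> has_jac F (line x u c) H ->
  derivable_pt_lim (fun t => dot (F (line x u t)) u) c (dot (mulmv H u) u).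
Proof.
move=> u_unit F_jac; apply: derivable_pt_lim_of_approx => eps eps_gt0.
have [d [d_gt0 d_approx]] := F_jac eps eps_gt0.
exists d; split=> // h h_lt.
have := d_approx (scale h u); rewrite vnorm_scale u_unit Rmult_1_r line_shift mulmv_scale.
move/(_ h_lt); apply: Rle_trans.
by rewrite -(dot_scal_l h) -!dot_sub_l; apply: Rabs_dot_unit_le.
Qed.

Lemma continuity_pt_pos_near (F : R -> R) c :
  continuity_pt F c -> 0 < F c ->
  exists d, 0 < d /\ forall y, Rabs (y - c) < d -> 0 < F y.
Proof.
move=> F_cont Fc_pos; have [d [d_gt0 F_near]] := F_cont (F c) Fc_pos.
exists d; split=> // y y_near.
case: (Req_dec y c) => [-> // | y_neq_c].
have /Rabs_def2 : Rabs (F y - F c) < F c 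
  by apply: F_near; split; [split; [done | exact: not_eq_sym] | exact: y_near].
lra.
Qed.

Lemma lub_lt_witness (E : R -> Prop) T t : is_lub E T -> t < T -> exists e, E e /\ t < e.
Proof.
move=> [_ T_least] t_lt_T; apply: NNPP => no_witness.
suff : T <= t by lra.
apply: T_least => e Ee; apply: Rnot_lt_le => t_lt_e; apply: no_witness; by exists e.
Qed.

Lemma mvt_upper_bound (F G : R -> R) a b M :
  a <= b -> (forall y, a <= y <= b -> derivable_pt_lim F y (G y)) ->
  (forall y, a <= y <= b -> G y <= M) -> F b <= F a + M * (b - a).
Proof.
move=> a_le_b F_deriv G_le.
case: (Req_dec a b) => [<- | a_neq_b]; first lra.
have a_lt_b : a < b by lra.
have [c [F_incr c_in]] := MVT_cor2 F G a b a_lt_b F_deriv.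
have := G_le c ltac:(lra); nra.
Qed.

Section Descent.

Variables (D : R -> Prop) (phi psi d2 : R -> R).
Hypothesis D_open : forall t, D t -> exists r, 0 < r /\ forall t', Rabs (t' - t) < r -> D t'.
Hypothesis phi_deriv : forall t, D t -> derivable_pt_lim phi t (psi t).
Hypothesis psi_deriv : forall t, D t -> derivable_pt_lim psi t (d2 t).
Hypothesis d2_le1 : forall t, D t -> d2 t <= 1.

Lemma descent_first_order t : 0 <= t -> (forall y, 0 <= y <= t -> D y) -> psi t <= psi 0 + t.
Proof.
move=> t_ge0 D_path.
have := mvt_upper_bound t_ge0 (fun y y_in => psi_deriv (D_path y y_in))
  (fun y y_in => d2_le1 (D_path y y_in)).
lra.
Qed.

Lemma descent_second_order t :
  0 <= t -> (forall y, 0 <= y <= t -> D y) -> phi t <= phi 0 + (psi 0 + t) * t.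
Proof.
move=> t_ge0 D_path.
have psi_le : forall y, 0 <= y <= t -> psi y <= psi 0 + t.
  move=> y y_in; apply: Rle_trans (descent_first_order (proj1 y_in) _) _; last lra.
  by move=> z z_in; apply: D_path; lra.
have := mvt_upper_bound t_ge0 (fun y y_in => phi_deriv (D_path y y_in)) psi_le.
by rewrite Rminus_0_r.
Qed.

Lemma first_exit_or_zero b c :
  D 0 -> 0 < phi 0 -> 0 < b -> c < b ->
  (forall t, 0 <= t <= b -> (forall y, 0 <= y <= t -> D y /\ 0 < phi y) -> t <= c) ->
  exists T, 0 <= T <= c /\ (forall y, 0 <= y < T -> D y) /\
            (~ D T \/ (D T /\ phi T = 0)).
Proof.
move=> D0 phi0_pos b_gt0 c_lt_b bounded.
pose E t := 0 <= t <= b /\ forall y, 0 <= y <= t -> D y /\ 0 < phi y.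
have E0 : E 0.
  by split; [lra | move=> y y_in; have -> : y = 0 by lra].
have [T T_lub] := completeness E (ex_intro _ b (fun t Et => proj2 (proj1 Et))) (ex_intro _ 0 E0).
have T_ge0 : 0 <= T by apply: (proj1 T_lub).
have T_le_c : T <= c by apply: (proj2 T_lub) => t [t_in pos]; apply: bounded.
have below : forall y, 0 <= y < T -> D y /\ 0 < phi y.
  move=> y y_in; have [e [[_ pos] y_lt_e]] := lub_lt_witness T_lub (proj2 y_in).
  by apply: pos; lra.
exists T; split; [lra | split; first by move=> y /below []].
case: (classic (D T)) => DT; [right; split=> // | by left].
have phi_cont : forall t, D t -> continuity_pt phi t.
  by move=> t Dt; apply: derivable_continuous_pt; exists (psi t); apply: phi_deriv.
apply: Rle_antisym; apply: Rnot_lt_le; [move=> phiT_pos | move=> phiT_neg].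
- have [r [r_gt0 r_D]] := D_open DT.
  have [d [d_gt0 d_pos]] := continuity_pt_pos_near (phi_cont T DT) phiT_pos.
  pose m := Rmin (Rmin r d) (b - T).
  have m_pos : 0 < m by rewrite /m; repeat apply: Rmin_pos; lra.
  have m_le : m <= r /\ m <= d /\ m <= b - T.
    by move: (Rmin_l (Rmin r d) (b - T)) (Rmin_r (Rmin r d) (b - T))
      (Rmin_l r d) (Rmin_r r d); rewrite -/m; lra.
  suff : E (T + m / 2) by move/(proj1 T_lub); lra.
  split=> [|y y_in]; first lra.
  case: (Rlt_le_dec y T) => [y_lt_T | T_le_y]; first by apply: below; lra.
  split; [apply: r_D | apply: d_pos]; rewrite Rabs_right; lra.
- have opp_cont : continuity_pt (fun t => - phi t) T := continuity_pt_opp phi T (phi_cont T DT).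
  have [d [d_gt0 d_neg]] := continuity_pt_pos_near opp_cont (ltac:(lra) : 0 < - phi T).
  have [e [[e_in pos] e_gt]] := lub_lt_witness T_lub (ltac:(lra) : T - d / 2 < T).
  have e_le_T : e <= T by apply: (proj1 T_lub).
  have := proj2 (pos e ltac:(lra)).
  have := d_neg e ltac:(rewrite Rabs_left1; lra); lra.
Qed.

Lemma descent_1d sigma eta N :
  0 < sigma -> 0 < eta -> sigma + eta < N ->
  D 0 -> 0 < phi 0 <= sigma * eta -> psi 0 = - N ->
  exists T, 0 <= T < sigma /\ (forall y, 0 <= y < T -> D y) /\
            (~ D T \/ (D T /\ phi T = 0 /\ psi T < - eta)).
Proof.
move=> sigma_gt0 eta_gt0 N_gt D0 phi0_in psi0.
(* On [0, sigma], phi t <= sigma eta - (N - sigma) t, so phi stays positive at most until c. *)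
pose c := sigma * eta / (N - sigma).
have c_def : (N - sigma) * c = sigma * eta by rewrite /c; field; lra.
have c_lt : c < sigma by nra.
have bounded : forall t, 0 <= t <= sigma ->
    (forall y, 0 <= y <= t -> D y /\ 0 < phi y) -> t <= c.
  move=> t t_in pos.
  have := descent_second_order (proj1 t_in) (fun y y_in => proj1 (pos y y_in)).
  have := proj2 (pos t ltac:(lra)); nra.
have [T [T_in [D_below exit]]] :=
  first_exit_or_zero D0 (proj1 phi0_in) sigma_gt0 c_lt bounded.
exists T; split; [nra | split=> //].
case: exit => [| [DT phiT0]]; [by left | right; do 2! split=> //].
have D_path : forall y, 0 <= y <= T -> D y.
  by move=> y y_in; case: (Req_dec y T) => [-> // | ?]; apply: D_below; lra.
have := descent_first_order (proj1 T_in) D_path; nra.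
Qed.

End Descent.

Lemma line_preimage_open n (O : vec n -> Prop) (x u : vec n) :
  is_open O -> vnorm u = 1 ->
  forall t, O (line x u t) -> exists r, 0 < r /\ forall t', Rabs (t' - t) < r -> O (line x u t').
Proof.
move=> O_open u_unit t Ot; have [r [r_gt0 ball]] := O_open _ Ot.
by exists r; split=> // t' near; apply: ball; rewrite vdist_line // Rabs_minus_sym.
Qed.

Lemma boundary_at_line_exit n (O : vec n -> Prop) (x u : vec n) T :
  vnorm u = 1 -> O x -> 0 <= T -> (forall y, 0 <= y < T -> O (line x u y)) ->
  ~ O (line x u T) -> vboundary O (line x u T).
Proof.
move=> u_unit Ox T_ge0 inside outside; split=> r r_gt0; last first.
  by exists (line x u T); split; rewrite ?vdist_refl.
have T_gt0 : 0 < T.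
  by case: (Req_dec T 0) => [T0 | ?]; [move: outside; rewrite T0 line0 | lra].
have m_in : 0 < Rmin T (r / 2) <= T /\ Rmin T (r / 2) <= r / 2.
  by move: (Rmin_l T (r / 2)) (Rmin_r T (r / 2)) (Rmin_pos T (r / 2) T_gt0 ltac:(lra)); lra.
exists (line x u (T - Rmin T (r / 2))); split; first by apply: inside; lra.
by rewrite vdist_line // Rabs_right; lra.
Qed.

Lemma exists_sign a : exists s, Rabs s = 1 /\ s * a = Rabs a.
Proof.
case: (Rle_lt_dec 0 a) => a_sign.
  by exists 1; rewrite Rabs_R1 Rabs_right; [split; [|ring] | lra].
by exists (-1); rewrite Rabs_Ropp Rabs_R1 Rabs_left //; split; [|ring].
Qed.

Lemma exists_descent_direction n (g : vec n) s :
  0 < vnorm g -> Rabs s = 1 -> exists u, vnorm u = 1 /\ s * dot g u = - vnorm g.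
Proof.
move=> g_pos s_abs; exists (scale (- s / vnorm g) g).
have ss : s * s = 1 by have := Rsqr_abs s; rewrite s_abs /Rsqr; lra.
rewrite vnorm_scale dot_scal_r -vnorm_sq /Rdiv Rabs_mult Rabs_Ropp Rabs_inv s_abs.
rewrite Rabs_right; last lra.
split; first by field; lra.
have -> : s * (- s * / vnorm g * (vnorm g * vnorm g)) = - (s * s) * vnorm g by field; lra.
by rewrite ss; ring.
Qed.

Theorem mainTheorem6 (n : nat) (Omega : vec n -> Prop) (f : vec n -> R)
  (gradf : vec n -> vec n) (hessf : vec n -> mat n) :
  is_open Omega ->
  is_C2 Omega f gradf hessf ->
  cont_on (vclosure Omega) f ->
  (forall x, Omega x -> opnorm_le (hessf x) 1) ->
  forall sigma eta : R, 0 < sigma -> 0 < eta ->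
  forall x, Omega x -> Rabs (f x) <= sigma * eta ->
    vnorm (gradf x) <= sigma + eta \/
    nbhd sigma (fun y => vboundary Omega y \/
                         (Omega y /\ f y = 0 /\ eta < vnorm (gradf y))) x.
Proof.
move=> Omega_open [f_grad [grad_jac _]] _ hess_le sigma eta sigma_gt0 eta_gt0 x Ox fx_small.
case: (Rle_lt_dec (vnorm (gradf x)) (sigma + eta)) => [| N_gt]; [by left | right].
case: (Req_dec (f x) 0) => [fx0 | fx_neq0].
  by exists x; split; [right; do 2! split=> //; lra | rewrite vdist_refl].
have [s [s_abs s_fx]] := exists_sign (f x).
have [u [u_unit u_descent]] := exists_descent_direction (ltac:(lra) : 0 < vnorm (gradf x)) s_abs.
pose phi t := s * f (line x u t).
pose psi t := s * dot (gradf (line x u t)) u.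
pose d2 t := s * dot (mulmv (hessf (line x u t)) u) u.
have d2_le1 : forall t, Omega (line x u t) -> d2 t <= 1.
  move=> t Ot; apply: Rle_trans (Rle_abs _) _; rewrite Rabs_mult s_abs Rmult_1_l.
  exact: quad_form_unit_le (hess_le _ Ot) u_unit.
have D0 : Omega (line x u 0) by rewrite line0.
have phi0 : 0 < phi 0 <= sigma * eta.
  by rewrite /phi line0 s_fx; split=> //; exact: Rabs_pos_lt.
have psi0 : psi 0 = - vnorm (gradf x) by rewrite /psi line0.
have [T [T_in [inside exit]]] := descent_1d (phi := phi) (psi := psi)
  (line_preimage_open (x := x) Omega_open u_unit)
  (fun t Ot => derivable_pt_lim_scal _ s _ _ (derivable_line_grad u_unit (f_grad _ Ot)))
  (fun t Ot => derivable_pt_lim_scal _ s _ _ (derivable_line_jac u_unit (grad_jac _ Ot)))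
  d2_le1 sigma_gt0 eta_gt0 N_gt D0 phi0 psi0.
exists (line x u T); split; last by rewrite -{1}(line0 x u) vdist_line // Rabs_left1; lra.
case: exit => [outside | [OT [phiT0 psiT]]]; [left | right].
  exact: boundary_at_line_exit u_unit Ox (proj1 T_in) inside outside.
split=> //; split.
  by case/Rmult_integral: phiT0 => // s0; move: s_abs; rewrite s0 Rabs_R0; lra.
have : Rabs (psi T) <= vnorm (gradf (line x u T)).
  by rewrite /psi Rabs_mult s_abs Rmult_1_l; apply: Rabs_dot_unit_le.
have := Rle_abs (- psi T); rewrite Rabs_Ropp; lra.
Qed.
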